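(* Let $\Gamma<H$ be a cocompact discrete subgroup of the three-dimensional Heisenberg group $H$ with the metric and magnetic form of the context. For each $E>|B|$, the set $\mathrm{Per}^E(\Gamma\backslash H)$ is dense in $S^E(\Gamma\backslash H)$.
   Context: $H$ is the simply connected Lie group whose Lie algebra has basis $X,Y,Z$ with only nonzero bracket $[X,Y]=Z$. Fix $A>0$; $g$ is the left-invariant Riemannian metric with $\{X/\sqrt A,Y/\sqrt A,Z\}$ orthonormal. With $\{\alpha,\beta,\zeta\}$ the dual basis and $B\in\mathbb R$, the magnetic form is $\Omega=d(B\zeta)=-B\alpha\wedge\beta$. A magnetic geodesic is a curve $\sigma$ with $\nabla_{\sigma'}\sigma'=F\sigma'$, where $\nabla$ is the Levi-Civita connection and $F$ is defined by $g(Fu,v)=\Omega(u,v)$; magnetic geodesics have constant speed (energy). $\Gamma\backslash H$ carries the induced metric and magnetic form. For a Riemannian manifold $M$ with magnetic form, $S^EM=\{V\in TM:|V|=E\}$, $\sigma_V$ is the magnetic geodesic with $\sigma_V'(0)=V$, and $\mathrm{Per}^E(M)=\{V\in S^EM:\sigma_V\text{ is periodic}\}$. *)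

From Stdlib Require Import Reals List.
From Coquelicot Require Import Coquelicot.
Open Scope R_scope.

(* Triples of reals: used both for points of H (coordinates (x,y,z)) and for
   tangent vectors expressed in the left-invariant frame (X,Y,Z). *)
Definition R3 : Type := (R * R * R)%type.
Definition c1 (p : R3) : R := fst (fst p).
Definition c2 (p : R3) : R := snd (fst p).
Definition c3 (p : R3) : R := snd p.

(* Its left-invariant vector fields at p = (x,y,z) are
     X = d/dx,  Y = d/dy + x d/dz,  Z = d/dz,
   whose only nonzero bracket is [X,Y] = Z. *)
Definition Hmul (p q : R3) : R3 :=
  (c1 p + c1 q, c2 p + c2 q, c3 p + c3 q + c1 p * c2 q).
Definition Hone : R3 := (0, 0, 0).
Definition Hinv (p : R3) : R3 := (- c1 p, - c2 p, - c3 p + c1 p * c2 p).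

Definition lie (u v : R3) : R3 := (0, 0, c1 u * c2 v - c2 u * c1 v).
Definition gmet (A : R) (u v : R3) : R :=
  A * (c1 u * c1 v + c2 u * c2 v) + c3 u * c3 v.
Definition vnorm (A : R) (u : R3) : R := sqrt (gmet A u u).
(* Magnetic form Omega = d(B zeta) = - B alpha /\ beta. *)
Definition Omega (B : R) (u v : R3) : R :=
  - B * (c1 u * c2 v - c2 u * c1 v).
(* Koszul formula for left-invariant fields: g(nabla_U V, W). *)
Definition koszul (A : R) (U V W : R3) : R :=
  / 2 * (gmet A (lie U V) W - gmet A (lie V W) U + gmet A (lie W U) V).

(* Max-norm distance on R^3 (induces the standard topology). *)
Definition dist3 (p q : R3) : R :=
  Rmax (Rabs (c1 p - c1 q)) (Rmax (Rabs (c2 p - c2 q)) (Rabs (c3 p - c3 q))).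

(* Velocity of a curve s in the left-invariant frame:
   s'(t) = a X + b Y + c Z with a = x', b = y', c = z' - x y'. *)
Definition vel (s : R -> R3) (t : R) : R3 :=
  (Derive (fun u => c1 (s u)) t,
   Derive (fun u => c2 (s u)) t,
   Derive (fun u => c3 (s u)) t - c1 (s t) * Derive (fun u => c2 (s u)) t).

(* Magnetic geodesic: nabla_{s'} s' = F s', where g(Fu,v) = Omega(u,v).
   Tested against every W (g is nondegenerate).  With s' = sum w_i E_i,
   nabla_{s'} s' = sum w_i' E_i + sum w_i w_j nabla_{E_i} E_j, so
   g(nabla_{s'} s', W) = g(w', W) + koszul(w, w, W). *)
Definition magnetic_geodesic (A B : R) (s : R -> R3) : Prop :=
  (forall t, ex_derive (fun u => c1 (s u)) t /\ ex_derive (fun u => c2 (s u)) t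
             /\ ex_derive (fun u => c3 (s u)) t) /\
  (forall t, ex_derive (fun u => c1 (vel s u)) t /\ ex_derive (fun u => c2 (vel s u)) t
             /\ ex_derive (fun u => c3 (vel s u)) t) /\
  (forall t (W : R3),
     gmet A (Derive (fun u => c1 (vel s u)) t,
             Derive (fun u => c2 (vel s u)) t,
             Derive (fun u => c3 (vel s u)) t) W
     + koszul A (vel s t) (vel s t) W
     = Omega B (vel s t) W).

(* Subgroups of H, discreteness, and cocompactness (compactness of the
   quotient Gamma\H: open sets of Gamma\H correspond to Gamma-invariant open
   subsets of H). *)
Definition is_subgroup (G : R3 -> Prop) : Prop :=
  G Hone /\ (forall a b, G a -> G b -> G (Hmul a b)) /\ (forall a, G a -> G (Hinv a)).

Definition is_discrete (G : R3 -> Prop) : Prop :=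
  forall a, G a -> exists eps, 0 < eps /\ forall b, G b -> dist3 a b < eps -> b = a.

Definition is_open3 (U : R3 -> Prop) : Prop :=
  forall p, U p -> exists eps, 0 < eps /\ forall q, dist3 p q < eps -> U q.

Definition G_invariant (G : R3 -> Prop) (U : R3 -> Prop) : Prop :=
  forall g p, G g -> U p -> U (Hmul g p).

Definition cocompact (G : R3 -> Prop) : Prop :=
  forall (I : Type) (U : I -> R3 -> Prop),
    (forall i, is_open3 (U i) /\ G_invariant G (U i)) ->
    (forall p, exists i, U i p) ->
    exists l : list I, forall p, exists i, List.In i l /\ U i p.

Definition cocompact_lattice (G : R3 -> Prop) : Prop :=
  is_subgroup G /\ is_discrete G /\ cocompact G.

Definition periodic_mod (G : R3 -> Prop) (s : R -> R3) : Prop :=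
  exists T, 0 < T /\ forall t, exists g, G g /\ s (t + T) = Hmul g (s t).

(* The (lift of the) vector w at p (frame components) lies in Per(Gamma\H):
   the magnetic geodesic with initial velocity (p,w) exists and is periodic
   in Gamma\H (every such solution; they are unique by ODE theory). *)
Definition in_Per (A B : R) (G : R3 -> Prop) (p w : R3) : Prop :=
  (exists s, magnetic_geodesic A B s /\ s 0 = p /\ vel s 0 = w) /\
  (forall s, magnetic_geodesic A B s -> s 0 = p -> vel s 0 = w -> periodic_mod G s).

From Stdlib Require Import Reals Lra Lia ZArith List Classical FunctionalExtensionality.
From Coquelicot Require Import Coquelicot.
Open Scope R_scope.

(* A magnetic geodesic whose frame velocity has vertical component c <> B keeps c constant,
   while its horizontal velocity rotates with angular frequency (c - B) / A.  After each full
   turn the curve returns to its horizontal position, translated along the centre by a drift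
   which on the energy sphere S^E equals pi A (1 + (E^2 - B^2) / (c - B)^2).  A cocompact
   Gamma contains a central element (0, 0, z) with z > 0, so the geodesic closes up in
   Gamma\H as soon as some multiple of the drift is an integral multiple of z.  For E > |B|
   the drift is a continuous non-constant function of c, hence is a rational multiple of z for
   values of c arbitrarily close to any given one; rescaling the horizontal part of the
   velocity then keeps the energy equal to E. *)

Lemma R3_eq (p q : R3) : c1 p = c1 q -> c2 p = c2 q -> c3 p = c3 q -> p = q.
Proof. destruct p as [[x y] z], q as [[x' y'] z']; unfold c1, c2, c3; simpl; congruence. Qed.

Lemma Hmul_Hinv_cancel (g p : R3) : Hmul (Hinv g) (Hmul g p) = p.
Proof. apply R3_eq; unfold Hmul, Hinv, c1, c2, c3; simpl; ring. Qed.

Lemma Hcommutator (g h : R3) :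
  Hmul (Hmul g h) (Hinv (Hmul h g)) = (0, 0, c1 g * c2 h - c2 g * c1 h).
Proof. apply R3_eq; unfold Hmul, Hinv, c1, c2, c3; simpl; ring. Qed.

Lemma subgroup_center_nat_multiple (G : R3 -> Prop) (z : R) :
  is_subgroup G -> G (0, 0, z) -> forall n : nat, G (0, 0, INR n * z).
Proof.
  intros [G1 [Gmul _]] Gz n; induction n as [|n IHn].
  - replace (INR 0 * z) with 0 by (simpl; ring); exact G1.
  - replace (0, 0, INR (S n) * z) with (Hmul (0, 0, z) (0, 0, INR n * z)); [now apply Gmul|].
    rewrite S_INR; apply R3_eq; unfold Hmul, c1, c2, c3; simpl; ring.
Qed.

Lemma subgroup_center_multiple (G : R3 -> Prop) (z : R) :
  is_subgroup G -> G (0, 0, z) -> forall k : Z, G (0, 0, IZR k * z).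
Proof.
  intros HG Gz k.
  destruct (Z.le_ge_cases 0 k) as [Hk|Hk].
  - rewrite <- (Z2Nat.id k Hk), <- INR_IZR_INZ.
    now apply subgroup_center_nat_multiple.
  - replace (0, 0, IZR k * z) with (Hinv (0, 0, INR (Z.to_nat (- k)) * z)).
    + apply HG; now apply subgroup_center_nat_multiple.
    + rewrite INR_IZR_INZ, Z2Nat.id, opp_IZR by lia.
      apply R3_eq; unfold Hinv, c1, c2, c3; simpl; ring.
Qed.

Lemma periodic_mod_of_shift (G : R3 -> Prop) (s : R -> R3) (T : R) (g : R3) :
  is_subgroup G -> G g -> T <> 0 ->
  (forall t, s (t + T) = Hmul g (s t)) -> periodic_mod G s.
Proof.
  intros HG Gg HT Hs.
  destruct (Rlt_or_le 0 T) as [Tpos|Tneg].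
  - exists T; split; [exact Tpos|]. intro t; exists g; auto.
  - exists (- T); split; [lra|]. intro t; exists (Hinv g); split; [now apply HG|].
    rewrite <- (Hmul_Hinv_cancel g (s (t + - T))), <- Hs.
    now replace (t + - T + T) with t by ring.
Qed.

Lemma dist3_refl (p : R3) : dist3 p p = 0.
Proof. unfold dist3, Rmax; rewrite !Rminus_diag, Rabs_R0; repeat destruct Rle_dec; lra. Qed.

Lemma dist3_sym (p q : R3) : dist3 p q = dist3 q p.
Proof. unfold dist3; now rewrite (Rabs_minus_sym (c1 p)), (Rabs_minus_sym (c2 p)), (Rabs_minus_sym (c3 p)). Qed.

Lemma dist3_ge_c1 (p q : R3) : Rabs (c1 p - c1 q) <= dist3 p q.
Proof. apply Rmax_l. Qed.

Lemma dist3_ge_c2 (p q : R3) : Rabs (c2 p - c2 q) <= dist3 p q.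
Proof. eapply Rle_trans; [apply Rmax_l | apply Rmax_r]. Qed.

Section HorizontalFunctional.
Variables al be : R.

Definition hlin (p : R3) : R := al * c1 p + be * c2 p.

Lemma hlin_Hmul (g p : R3) : hlin (Hmul g p) = hlin g + hlin p.
Proof. unfold hlin, Hmul, c1, c2; simpl; ring. Qed.

Lemma hlin_lipschitz (p q : R3) :
  Rabs (hlin p - hlin q) <= (Rabs al + Rabs be) * dist3 p q.
Proof.
  unfold hlin.
  replace (al * c1 p + be * c2 p - (al * c1 q + be * c2 q))
    with (al * (c1 p - c1 q) + be * (c2 p - c2 q)) by ring.
  eapply Rle_trans; [apply Rabs_triang|]. rewrite !Rabs_mult, Rmult_plus_distr_r.
  apply Rplus_le_compat; apply Rmult_le_compat_l;
    auto using Rabs_pos, dist3_ge_c1, dist3_ge_c2.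
Qed.

Lemma is_open3_hlin_lt (r : R) : is_open3 (fun p => Rabs (hlin p) < r).
Proof.
  intros p Hp. set (K := Rabs al + Rabs be).
  assert (HK : 0 <= K) by (unfold K; pose proof (Rabs_pos al); pose proof (Rabs_pos be); lra).
  exists ((r - Rabs (hlin p)) / (K + 1)); split; [apply Rdiv_lt_0_compat; lra|].
  intros q Hq.
  assert (Hd : 0 <= dist3 p q) by (eapply Rle_trans; [apply Rabs_pos | apply dist3_ge_c1]).
  assert (HKd : (K + 1) * dist3 p q < r - Rabs (hlin p)).
  { apply (Rmult_lt_compat_l (K + 1)) in Hq; [|lra].
    now replace ((K + 1) * ((r - Rabs (hlin p)) / (K + 1))) with (r - Rabs (hlin p))
      in Hq by (field; lra). }
  pose proof (hlin_lipschitz q p) as Hlip. fold K in Hlip. rewrite dist3_sym in Hlip.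
  pose proof (Rabs_triang_inv (hlin q) (hlin p)). nra.
Qed.

Lemma not_cocompact_in_hlin_kernel (G : R3 -> Prop) :
  (al <> 0 \/ be <> 0) -> (forall g, G g -> hlin g = 0) -> ~ cocompact G.
Proof.
  intros Hnz Hker Hcpt.
  destruct (Hcpt nat (fun n p => Rabs (hlin p) < INR n)) as [l Hl].
  - intro n; split; [apply is_open3_hlin_lt|].
    intros g p Gg Hp. now rewrite hlin_Hmul, Hker, Rplus_0_l.
  - intro p. destruct (archimed (Rabs (hlin p))) as [Hup _].
    exists (Z.to_nat (up (Rabs (hlin p)))).
    rewrite INR_IZR_INZ, Z2Nat.id; [exact Hup|].
    apply le_IZR; pose proof (Rabs_pos (hlin p)); lra.
  - set (N := list_max l).
    assert (Hd : 0 < al * al + be * be)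
      by (destruct Hnz as [H|H]; [pose proof (Rsqr_pos_lt al H) | pose proof (Rsqr_pos_lt be H)];
          unfold Rsqr in *; nra).
    destruct (Hl (al * INR N / (al * al + be * be), be * INR N / (al * al + be * be), 0))
      as [i [Hi Hlt]].
    replace (hlin _) with (INR N) in Hlt by (unfold hlin, c1, c2; simpl; field; lra).
    rewrite Rabs_right in Hlt by (apply Rle_ge, pos_INR).
    apply INR_lt in Hlt.
    assert (HiN : (i <= N)%nat).
    { apply (proj1 (Forall_forall _ l) (proj1 (list_max_le l N) (Nat.le_refl N)) i Hi). }
    lia.
Qed.
End HorizontalFunctional.

(* Commutators of elements of Gamma are central; if Gamma has no nontrivial central element,
   all of them vanish and Gamma projects into a line of the horizontal plane. *)
Lemma cocompact_lattice_center (G : R3 -> Prop) :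
  cocompact_lattice G -> exists z, 0 < z /\ G (0, 0, z).
Proof.
  intros [HG [_ Hcpt]].
  apply NNPP; intro Hno.
  assert (Hcomm : forall g h, G g -> G h -> c1 g * c2 h - c2 g * c1 h = 0).
  { intros g h Gg Gh. set (d := c1 g * c2 h - c2 g * c1 h).
    assert (Gd : G (0, 0, d)).
    { unfold d; rewrite <- Hcommutator. apply HG; [|apply HG]; now apply HG. }
    destruct (Rtotal_order d 0) as [Hlt|[Heq|Hgt]]; [|exact Heq|].
    - exfalso; apply Hno; exists (- d); split; [lra|].
      replace (0, 0, - d) with (Hinv (0, 0, d)); [now apply HG|].
      apply R3_eq; unfold Hinv, c1, c2, c3; simpl; ring.
    - exfalso; apply Hno; now exists d. }
  destruct (classic (exists g, G g /\ (c1 g <> 0 \/ c2 g <> 0))) as [[g0 [Gg0 Hg0]]|Hflat].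
  - apply (not_cocompact_in_hlin_kernel (c2 g0) (- c1 g0) G); [|intros h Gh|exact Hcpt].
    + destruct Hg0; [right; lra | left; lra].
    + unfold hlin. pose proof (Hcomm g0 h Gg0 Gh); lra.
  - apply (not_cocompact_in_hlin_kernel 1 0 G); [left; lra| |exact Hcpt].
    intros g Gg. unfold hlin.
    destruct (Req_dec (c1 g) 0) as [->|Hne]; [ring|].
    exfalso; apply Hflat; exists g; auto.
Qed.

Lemma is_derive_0_const (f : R -> R) : (forall t, is_derive f t 0) -> forall t, f t = f 0.
Proof.
  intros Hf t.
  destruct (Rtotal_order t 0) as [Hlt|[->|Hgt]]; [| reflexivity |].
  - apply eq_is_derive; [intros; apply Hf | exact Hlt].
  - symmetry; apply eq_is_derive; [intros; apply Hf | exact Hgt].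
Qed.

Lemma is_derive_same_eq (f g h : R -> R) :
  (forall t, is_derive f t (h t)) -> (forall t, is_derive g t (h t)) ->
  f 0 = g 0 -> forall t, f t = g t.
Proof.
  intros Hf Hg H0 t. apply Rminus_diag_uniq.
  rewrite (is_derive_0_const (fun t => f t - g t)), H0; [ring|].
  intro u; rewrite <- (Rminus_diag (h u)).
  exact (is_derive_minus _ _ _ _ _ (Hf u) (Hg u)).
Qed.

Lemma rotation_unique (om : R) (u1 u2 : R -> R) :
  (forall t, is_derive u1 t (- om * u2 t)) -> (forall t, is_derive u2 t (om * u1 t)) ->
  forall t, u1 t = u1 0 * cos (om * t) - u2 0 * sin (om * t) /\
            u2 t = u1 0 * sin (om * t) + u2 0 * cos (om * t).
Proof.
  intros H1 H2.
  assert (Hx1 : forall t, ex_derive u1 t) by (intro t; eexists; apply H1).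
  assert (Hx2 : forall t, ex_derive u2 t) by (intro t; eexists; apply H2).
  assert (D1 : forall t, Derive u1 t = - om * u2 t) by (intro t; now apply is_derive_unique).
  assert (D2 : forall t, Derive u2 t = om * u1 t) by (intro t; now apply is_derive_unique).
  (* the velocity rotated back by the angle [om t] is conserved *)
  assert (Hf : forall t, u1 t * cos (om * t) + u2 t * sin (om * t) = u1 0).
  { intro t. rewrite (is_derive_0_const (fun t => u1 t * cos (om * t) + u2 t * sin (om * t))).
    - rewrite Rmult_0_r, sin_0, cos_0; ring.
    - intro s. auto_derive; [auto|]. rewrite D1, D2; ring. }
  assert (Hg : forall t, - u1 t * sin (om * t) + u2 t * cos (om * t) = u2 0).
  { intro t. rewrite (is_derive_0_const (fun t => - u1 t * sin (om * t) + u2 t * cos (om * t))).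
    - rewrite Rmult_0_r, sin_0, cos_0; ring.
    - intro s. auto_derive; [auto|]. rewrite D1, D2; ring. }
  intro t. pose proof (sin2_cos2 (om * t)) as Hsc; unfold Rsqr in Hsc.
  rewrite <- (Hf t), <- (Hg t).
  split; [rewrite <- (Rmult_1_r (u1 t)) at 1 | rewrite <- (Rmult_1_r (u2 t)) at 1];
    rewrite <- Hsc; ring.
Qed.

Definition differentiable_curve (s : R -> R3) : Prop :=
  forall t, ex_derive (fun u => c1 (s u)) t /\ ex_derive (fun u => c2 (s u)) t /\
            ex_derive (fun u => c3 (s u)) t.

Lemma curve_eq_of_vel (s1 s2 : R -> R3) :
  differentiable_curve s1 -> differentiable_curve s2 -> s1 0 = s2 0 ->
  (forall t, vel s1 t = vel s2 t) -> forall t, s1 t = s2 t.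
Proof.
  intros D1 D2 H0 Hv.
  assert (Hx : forall t, c1 (s1 t) = c1 (s2 t)).
  { apply (is_derive_same_eq _ _ (fun t => c1 (vel s2 t))); [intro t | intro t | now rewrite H0].
    - rewrite <- Hv. apply Derive_correct, D1.
    - apply Derive_correct, D2. }
  assert (Hy : forall t, c2 (s1 t) = c2 (s2 t)).
  { apply (is_derive_same_eq _ _ (fun t => c2 (vel s2 t))); [intro t | intro t | now rewrite H0].
    - rewrite <- Hv. apply Derive_correct, D1.
    - apply Derive_correct, D2. }
  (* the third component of [vel s] is z' - x y' *)
  assert (Hz : forall t, c3 (s1 t) = c3 (s2 t)).
  { apply (is_derive_same_eq _ _ (fun t => c3 (vel s2 t) + c1 (s2 t) * c2 (vel s2 t)));
      [intro t | intro t | now rewrite H0].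
    - rewrite <- Hv, <- Hx.
      replace (c3 (vel s1 t) + c1 (s1 t) * c2 (vel s1 t))
        with (Derive (fun u => c3 (s1 u)) t) by (unfold vel, c1, c2, c3; simpl; ring).
      apply Derive_correct, D1.
    - replace (c3 (vel s2 t) + c1 (s2 t) * c2 (vel s2 t))
        with (Derive (fun u => c3 (s2 u)) t) by (unfold vel, c1, c2, c3; simpl; ring).
      apply Derive_correct, D2. }
  intro t; apply R3_eq; auto.
Qed.

Lemma magnetic_frame_equations (A B : R) (s : R -> R3) :
  magnetic_geodesic A B s -> forall t,
  Derive (fun u => c3 (vel s u)) t = 0 /\
  A * Derive (fun u => c1 (vel s u)) t = (B - c3 (vel s t)) * c2 (vel s t) /\
  A * Derive (fun u => c2 (vel s u)) t = (c3 (vel s t) - B) * c1 (vel s t).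
Proof.
  intros [_ [_ Heq]] t.
  pose proof (Heq t (1, 0, 0)) as E1. pose proof (Heq t (0, 1, 0)) as E2.
  pose proof (Heq t (0, 0, 1)) as E3.
  destruct (vel s t) as [[v1 v2] v3].
  unfold koszul, lie, gmet, Omega, c1, c2, c3 in *; simpl in *.
  repeat split; lra.
Qed.

Definition cyclotron (A B c : R) : R := (c - B) / A.

(* Vertical displacement of the magnetic geodesic with frame velocity [w] during one turn
   of its horizontal velocity, which rotates with angular frequency [cyclotron A B (c3 w)]. *)
Definition turn_drift (A B : R) (w : R3) : R :=
  let om := cyclotron A B (c3 w) in
  2 * PI / om * (c3 w + (c1 w ^ 2 + c2 w ^ 2) / (2 * om)).

Section ExplicitSolution.
Variables (A B c a0 b0 : R) (p0 : R3).
Hypothesis A_pos : 0 < A.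
Hypothesis c_neq_B : c <> B.

Local Notation om := (cyclotron A B c).

Lemma cyclotron_neq0 : om <> 0.
Proof.
  unfold cyclotron, Rdiv. apply Rmult_integral_contrapositive; split; [lra|].
  apply Rinv_neq_0_compat; lra.
Qed.

Definition hvel_x (t : R) : R := a0 * cos (om * t) - b0 * sin (om * t).
Definition hvel_y (t : R) : R := a0 * sin (om * t) + b0 * cos (om * t).
Definition msol_x (t : R) : R := c1 p0 + (hvel_y t - b0) / om.
Definition msol_y (t : R) : R := c2 p0 - (hvel_x t - a0) / om.
(* a primitive of [z' = c + x y'] *)
Definition msol_z (t : R) : R :=
  c3 p0 + c * t + (c1 p0 - b0 / om) * (- (hvel_x t - a0) / om)
  + / om * ((a0 ^ 2 + b0 ^ 2) * t / 2 + (b0 ^ 2 - a0 ^ 2) / (4 * om) * sin (2 * om * t)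
            - a0 * b0 / (2 * om) * (cos (2 * om * t) - 1)).
Definition msol (t : R) : R3 := (msol_x t, msol_y t, msol_z t).

Lemma is_derive_hvel_x (t : R) : is_derive hvel_x t (- om * hvel_y t).
Proof. unfold hvel_x, hvel_y. auto_derive; auto. ring. Qed.

Lemma is_derive_hvel_y (t : R) : is_derive hvel_y t (om * hvel_x t).
Proof. unfold hvel_x, hvel_y. auto_derive; auto. ring. Qed.

Lemma is_derive_msol_x (t : R) : is_derive msol_x t (hvel_x t).
Proof. unfold msol_x, hvel_x, hvel_y. pose proof cyclotron_neq0. auto_derive; auto. field; auto. Qed.

Lemma is_derive_msol_y (t : R) : is_derive msol_y t (hvel_y t).
Proof. unfold msol_y, hvel_x, hvel_y. pose proof cyclotron_neq0. auto_derive; auto. field; auto. Qed.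

Lemma is_derive_msol_z (t : R) : is_derive msol_z t (c + msol_x t * hvel_y t).
Proof.
  unfold msol_z, msol_x, hvel_x, hvel_y. pose proof cyclotron_neq0. auto_derive; auto.
  replace (2 * om * t) with (2 * (om * t)) by ring.
  rewrite cos_2a, sin_2a.
  pose proof (sin2_cos2 (om * t)) as Hsc; unfold Rsqr in Hsc.
  apply Rminus_diag_uniq.
  transitivity ((a0 ^ 2 + b0 ^ 2) / (2 * om) *
                (1 - (sin (om * t) * sin (om * t) + cos (om * t) * cos (om * t)))).
  - field; auto.
  - rewrite Hsc; ring.
Qed.

Lemma vel_msol : vel msol = fun t => (hvel_x t, hvel_y t, c).
Proof.
  apply functional_extensionality; intro t; unfold vel.
  change (fun u => c1 (msol u)) with msol_x; change (fun u => c2 (msol u)) with msol_y;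
  change (fun u => c3 (msol u)) with msol_z.
  rewrite (is_derive_unique _ _ _ (is_derive_msol_x t)),
    (is_derive_unique _ _ _ (is_derive_msol_y t)),
    (is_derive_unique _ _ _ (is_derive_msol_z t)).
  apply R3_eq; unfold c1, c2, c3; simpl; ring.
Qed.

Lemma msol_differentiable : differentiable_curve msol.
Proof.
  intro t; repeat split; eexists;
    [apply is_derive_msol_x | apply is_derive_msol_y | apply is_derive_msol_z].
Qed.

Lemma msol_magnetic_geodesic : magnetic_geodesic A B msol.
Proof.
  split; [exact msol_differentiable|]. rewrite vel_msol; unfold c1, c2, c3; simpl.
  change (fun u => hvel_x u) with hvel_x; change (fun u => hvel_y u) with hvel_y.
  split.
  - intro t; repeat split; eexists;
      [apply is_derive_hvel_x | apply is_derive_hvel_y | apply is_derive_const].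
  - intros t [[w1 w2] w3].
    rewrite (is_derive_unique _ _ _ (is_derive_hvel_x t)),
      (is_derive_unique _ _ _ (is_derive_hvel_y t)), Derive_const.
    unfold koszul, lie, gmet, Omega, cyclotron, c1, c2, c3; simpl.
    field; lra.
Qed.

Lemma msol_init : msol 0 = p0 /\ vel msol 0 = (a0, b0, c).
Proof.
  pose proof cyclotron_neq0.
  rewrite vel_msol; unfold msol, msol_x, msol_y, msol_z, hvel_x, hvel_y.
  rewrite !Rmult_0_r, sin_0, cos_0.
  split; apply R3_eq; unfold c1, c2, c3; simpl; field; auto.
Qed.

Lemma magnetic_geodesic_eq_msol (s : R -> R3) :
  magnetic_geodesic A B s -> s 0 = p0 -> vel s 0 = (a0, b0, c) -> forall t, s t = msol t.
Proof.
  intros Hs Hs0 Hsv.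
  pose proof (magnetic_frame_equations A B s Hs) as Heq.
  destruct Hs as [Hd [Hdv _]].
  assert (Hc : forall t, c3 (vel s t) = c).
  { intro t. rewrite (is_derive_0_const (fun u => c3 (vel s u))), Hsv; [reflexivity|].
    intro u. rewrite <- (proj1 (Heq u)). apply Derive_correct, Hdv. }
  assert (Hrot : forall t, c1 (vel s t) = hvel_x t /\ c2 (vel s t) = hvel_y t).
  { intro t. unfold hvel_x, hvel_y.
    replace a0 with (c1 (vel s 0)) by now rewrite Hsv.
    replace b0 with (c2 (vel s 0)) by now rewrite Hsv.
    apply (rotation_unique om (fun t => c1 (vel s t)) (fun t => c2 (vel s t))); intro u.
    - replace (- om * c2 (vel s u)) with (Derive (fun u => c1 (vel s u)) u).
      + apply Derive_correct, Hdv.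
      + apply (Rmult_eq_reg_l A); [|lra]. rewrite (proj1 (proj2 (Heq u))), Hc.
        unfold cyclotron; field; lra.
    - replace (om * c1 (vel s u)) with (Derive (fun u => c2 (vel s u)) u).
      + apply Derive_correct, Hdv.
      + apply (Rmult_eq_reg_l A); [|lra]. rewrite (proj2 (proj2 (Heq u))), Hc.
        unfold cyclotron; field; lra. }
  apply curve_eq_of_vel; [exact Hd | exact msol_differentiable | now rewrite (proj1 msol_init) |].
  intro t. rewrite vel_msol. destruct (Hrot t) as [Hx Hy].
  apply R3_eq; [exact Hx | exact Hy | apply Hc].
Qed.

Lemma msol_turns (M : nat) (t : R) :
  msol (t + INR M * (2 * PI / om)) = Hmul (0, 0, INR M * turn_drift A B (a0, b0, c)) (msol t).
Proof.
  pose proof cyclotron_neq0.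
  unfold msol, msol_x, msol_y, msol_z, hvel_x, hvel_y.
  replace (om * (t + INR M * (2 * PI / om))) with (om * t + 2 * INR M * PI) by (field; auto).
  replace (2 * om * (t + INR M * (2 * PI / om))) with (2 * om * t + 2 * INR (2 * M) * PI)
    by (rewrite mult_INR; simpl; field; auto).
  rewrite !cos_period, !sin_period.
  apply R3_eq; unfold turn_drift, Hmul, c1, c2, c3; simpl; field; auto.
Qed.

End ExplicitSolution.

Lemma in_Per_of_resonant (A B : R) (G : R3 -> Prop) (p w : R3) (z : R) (M : nat) (n : Z) :
  0 < A -> is_subgroup G -> G (0, 0, z) -> c3 w <> B -> (0 < M)%nat ->
  INR M * turn_drift A B w = IZR n * z -> in_Per A B G p w.
Proof.
  intros HA HG Gz HcB HM Hres.
  destruct w as [[a0 b0] c]; unfold c3 in HcB; simpl in HcB.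
  split.
  - exists (msol A B c a0 b0 p).
    split; [now apply msol_magnetic_geodesic | now apply msol_init].
  - intros s Hs Hs0 Hsv.
    apply (periodic_mod_of_shift G s (INR M * (2 * PI / cyclotron A B c)) (0, 0, IZR n * z) HG).
    + now apply subgroup_center_multiple.
    + pose proof (cyclotron_neq0 A B c HA HcB). pose proof PI_RGT_0.
      apply lt_0_INR in HM. apply Rmult_integral_contrapositive; split; [lra|].
      unfold Rdiv; apply Rmult_integral_contrapositive; split; [lra|]. now apply Rinv_neq_0_compat.
    + intro t. rewrite !(magnetic_geodesic_eq_msol A B c a0 b0 p HA HcB s Hs Hs0 Hsv).
      rewrite msol_turns by assumption. now rewrite Hres.
Qed.

Lemma vnorm_sqr (A : R) (w : R3) : 0 < A -> vnorm A w * vnorm A w = gmet A w w.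
Proof.
  intro HA. apply sqrt_sqrt. destruct w as [[a b] c]; unfold gmet, c1, c2, c3; simpl; nra.
Qed.

Lemma turn_drift_on_sphere (A B E : R) (w : R3) :
  0 < A -> c3 w <> B -> vnorm A w = E ->
  turn_drift A B w = PI * A * (1 + (E * E - B * B) / ((c3 w - B) * (c3 w - B))).
Proof.
  intros HA HcB HE. rewrite <- HE, vnorm_sqr by exact HA.
  assert (c3 w - B <> 0) by lra.
  destruct w as [[a b] c]; unfold turn_drift, cyclotron, gmet, c1, c2, c3 in *; simpl in *.
  field; lra.
Qed.

Lemma rational_between (x y : R) :
  x < y -> exists (n : Z) (M : nat), (0 < M)%nat /\ x < IZR n / INR M < y.
Proof.
  intro Hxy. destruct (archimed (/ (y - x))) as [Hm _].
  assert (Hinv : 0 < / (y - x)) by (apply Rinv_0_lt_compat; lra).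
  set (m := up (/ (y - x))) in *.
  assert (Hm0 : 0 < IZR m) by lra.
  assert (Hgap : 1 < IZR m * (y - x)).
  { apply (Rmult_lt_compat_r (y - x)) in Hm; [|lra]. rewrite Rinv_l in Hm; lra. }
  destruct (archimed (IZR m * x)) as [H1 H2].
  exists (up (IZR m * x)), (Z.to_nat m). split; [apply lt_IZR in Hm0; lia|].
  rewrite INR_IZR_INZ, Z2Nat.id by (apply le_IZR; lra).
  split; apply (Rmult_lt_reg_l (IZR m)); auto; field_simplify; lra.
Qed.

Lemma continuous_takes_rational_value (f : R -> R) (x y : R) :
  x < y -> (forall c, x <= c <= y -> continuity_pt f c) -> f x <> f y ->
  exists c (n : Z) (M : nat), x <= c <= y /\ (0 < M)%nat /\ f c = IZR n / INR M.
Proof.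
  intros Hxy Hf Hne.
  assert (Hcont : forall q, forall c, x <= c <= y ->
            continuity_pt (fun c => f c - q) c /\ continuity_pt (fun c => q - f c) c).
  { intros q c Hc; split; reg; now apply Hf. }
  destruct (Rlt_or_le (f x) (f y)) as [Hlt|Hle].
  - destruct (rational_between _ _ Hlt) as [n [M [HM [Hq1 Hq2]]]].
    destruct (Ranalysis5.IVT_interv (fun c => f c - IZR n / INR M) x y)
      as [c [Hc Hfc]]; [intros; now apply Hcont | exact Hxy | lra | lra |].
    exists c, n, M; repeat split; auto; lra.
  - destruct (rational_between (f y) (f x)) as [n [M [HM [Hq1 Hq2]]]]; [lra|].
    destruct (Ranalysis5.IVT_interv (fun c => IZR n / INR M - f c) x y)
      as [c [Hc Hfc]]; [intros; now apply Hcont | exact Hxy | lra | lra |].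
    exists c, n, M; repeat split; auto; lra.
Qed.

Lemma subinterval_avoiding (l u B : R) :
  l < u -> exists k1 k2, l <= k1 < k2 /\ k2 <= u /\ (B < k1 \/ k2 < B).
Proof.
  intro Hlu. set (m := (l + u) / 2).
  destruct (Rle_or_lt B m) as [HB|HB].
  - exists ((m + u) / 2), u. unfold m in *; repeat split; lra.
  - exists l, m. unfold m in *; repeat split; lra.
Qed.

Lemma resonant_vertical_near (A B E z c0 d : R) :
  0 < A -> Rabs B < E -> 0 < z -> -E <= c0 <= E -> 0 < d ->
  exists c (M : nat) (n : Z),
    -E <= c <= E /\ Rabs (c - c0) < d /\ c <> B /\ (0 < M)%nat /\
    INR M * (PI * A * (1 + (E * E - B * B) / ((c - B) * (c - B)))) = IZR n * z.
Proof.
  intros HA HBE Hz Hc0 Hd.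
  assert (HB : - E < B < E) by (apply Rabs_def2 in HBE; lra).
  set (l := Rmax (- E) (c0 - d / 2)). set (u := Rmin E (c0 + d / 2)).
  assert (Hlu : l < u) by (apply Rmax_lub_lt; apply Rmin_glb_lt; lra).
  assert (Hl : - E <= l /\ c0 - d / 2 <= l) by (split; [apply Rmax_l | apply Rmax_r]).
  assert (Hu : u <= E /\ u <= c0 + d / 2) by (split; [apply Rmin_l | apply Rmin_r]).
  destruct (subinterval_avoiding l u B Hlu) as [k1 [k2 [[Hlk1 Hk12] [Hk2u Hside]]]].
  assert (HnB : forall c, k1 <= c <= k2 -> c <> B) by (intros c Hc; destruct Hside; lra).
  set (K := PI * A / z).
  assert (HK : 0 < K) by (apply Rdiv_lt_0_compat; [apply Rmult_lt_0_compat; [apply PI_RGT_0|]|]; lra).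
  set (f := fun c => K * (1 + (E * E - B * B) / ((c - B) * (c - B)))).
  assert (Hf : forall c, k1 <= c <= k2 -> continuity_pt f c).
  { intros c Hc. pose proof (HnB c Hc). unfold f; reg. apply Rmult_integral_contrapositive; split; lra. }
  assert (Hf12 : f k1 <> f k2).
  { assert (Hsq : (k1 - B) * (k1 - B) <> (k2 - B) * (k2 - B)) by (destruct Hside; nra).
    unfold f; intro Heq; apply Hsq.
    apply Rmult_eq_reg_l, Rplus_eq_reg_l in Heq; [|lra].
    unfold Rdiv in Heq; apply Rmult_eq_reg_l, Rinv_eq_reg in Heq; [exact Heq|nra]. }
  destruct (continuous_takes_rational_value f k1 k2 Hk12 Hf Hf12) as [c [n [M [Hc [HM Hfc]]]]].
  exists c, M, n. repeat split; [lra | lra | apply Rabs_def1; lra | now apply HnB | exact HM |].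
  apply lt_0_INR in HM.
  replace (PI * A * (1 + (E * E - B * B) / ((c - B) * (c - B)))) with (f c * z)
    by (unfold f, K; field; lra).
  rewrite Hfc; field; lra.
Qed.

Lemma c3_between_vnorm (A : R) (w : R3) : 0 < A -> - vnorm A w <= c3 w <= vnorm A w.
Proof.
  intro HA. pose proof (vnorm_sqr A w HA) as Hsq. pose proof (sqrt_pos (gmet A w w)) as Hpos.
  fold (vnorm A w) in Hpos.
  destruct w as [[a b] c]; unfold gmet, c1, c2, c3 in *; simpl in *. split; nra.
Qed.

Lemma polar_decomposition (a b : R) :
  exists u1 u2, u1 * u1 + u2 * u2 = 1 /\
    a = sqrt (a * a + b * b) * u1 /\ b = sqrt (a * a + b * b) * u2.
Proof.
  assert (Hn : 0 <= a * a + b * b) by nra.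
  destruct (Req_dec (sqrt (a * a + b * b)) 0) as [H0|Hne].
  - apply sqrt_eq_0 in H0; [|exact Hn].
    exists 1, 0. rewrite H0, sqrt_0. repeat split; nra.
  - pose proof (sqrt_sqrt _ Hn) as Hs.
    exists (a / sqrt (a * a + b * b)), (b / sqrt (a * a + b * b)).
    repeat split; [|field; exact Hne | field; exact Hne].
    replace (a / sqrt (a * a + b * b) * (a / sqrt (a * a + b * b)) +
             b / sqrt (a * a + b * b) * (b / sqrt (a * a + b * b)))
      with ((a * a + b * b) / (sqrt (a * a + b * b) * sqrt (a * a + b * b))) by (field; exact Hne).
    rewrite Hs. field. intro Hz. rewrite Hz, sqrt_0 in Hne. now apply Hne.
Qed.

Lemma vnorm_vertical_adjust (A E : R) (w : R3) (eps : R) :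
  0 < A -> vnorm A w = E -> 0 < eps ->
  exists del, 0 < del /\ forall c, - E <= c <= E -> Rabs (c - c3 w) < del ->
    exists w', c3 w' = c /\ vnorm A w' = E /\ dist3 w w' < eps.
Proof.
  intros HA Hw Heps.
  pose proof (vnorm_sqr A w HA) as Hsq. rewrite Hw in Hsq.
  pose proof (c3_between_vnorm A w HA) as Hc0. rewrite Hw in Hc0.
  destruct w as [[a b] c0]; unfold gmet, c1, c2, c3 in *; simpl in *.
  destruct (polar_decomposition a b) as [u1 [u2 [Hu [Ha Hb]]]].
  set (rho := fun c => sqrt ((E * E - c * c) / A)).
  assert (Hrho0 : sqrt (a * a + b * b) = rho c0) by (unfold rho; f_equal; field_simplify_eq; lra).
  rewrite Hrho0 in Ha, Hb.
  assert (Hcont : continuity_pt rho c0).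
  { apply (continuity_pt_comp (fun c => (E * E - c * c) / A) sqrt); [reg|].
    apply continuity_pt_sqrt, Rdiv_le_0_compat; nra. }
  destruct (Hcont eps Heps) as [del [Hdel Hrho]]; simpl in Hrho; unfold R_dist in Hrho.
  exists (Rmin del eps); split; [now apply Rmin_pos|].
  intros c Hc Hcc0.
  assert (Hdc : Rabs (c - c0) < del /\ Rabs (c - c0) < eps)
    by (split; eapply Rlt_le_trans; eauto using Rmin_l, Rmin_r).
  assert (Hrc : Rabs (rho c - rho c0) < eps).
  { destruct (Req_dec c c0) as [->|Hne]; [rewrite Rminus_diag, Rabs_R0; lra|].
    apply Hrho; split; [split; [exact I | auto] | tauto]. }
  assert (Hr2 : rho c * rho c = (E * E - c * c) / A)
    by (apply sqrt_sqrt, Rdiv_le_0_compat; nra).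
  exists (rho c * u1, rho c * u2, c); split; [reflexivity | split].
  - unfold vnorm, gmet, c1, c2, c3; simpl.
    replace (A * (rho c * u1 * (rho c * u1) + rho c * u2 * (rho c * u2)) + c * c) with (E * E).
    + apply sqrt_square; lra.
    + transitivity (A * (rho c * rho c) * (u1 * u1 + u2 * u2) + c * c); [|ring].
      rewrite Hu, Hr2; field; lra.
  - assert (Hcomp : forall u, Rabs u <= 1 -> Rabs (rho c0 * u - rho c * u) < eps).
    { intros u Hu1. replace (rho c0 * u - rho c * u) with (- ((rho c - rho c0) * u)) by ring.
      rewrite Rabs_Ropp, Rabs_mult.
      pose proof (Rabs_pos (rho c - rho c0)); pose proof (Rabs_pos u); nra. }
    unfold dist3, c1, c2, c3; simpl. rewrite Ha, Hb.
    repeat apply Rmax_lub_lt; [apply Hcomp, Rabs_le; nra | apply Hcomp, Rabs_le; nra |].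
    rewrite Rabs_minus_sym; tauto.
Qed.

Theorem theorem4p17 (A B : R) (G : R3 -> Prop) :
  0 < A -> cocompact_lattice G ->
  forall E : R, Rabs B < E ->
  forall (p w : R3), vnorm A w = E ->
  forall eps : R, 0 < eps ->
  exists p' w' : R3,
    vnorm A w' = E /\ dist3 p p' < eps /\ dist3 w w' < eps /\ in_Per A B G p' w'.
Proof.
  intros HA HG E HBE p w Hw eps Heps.
  destruct (cocompact_lattice_center G HG) as [z [Hz Gz]].
  destruct (vnorm_vertical_adjust A E w eps HA Hw Heps) as [del [Hdel Hadjust]].
  assert (Hc0 : - E <= c3 w <= E) by (rewrite <- Hw; now apply c3_between_vnorm).
  destruct (resonant_vertical_near A B E z (c3 w) del HA HBE Hz Hc0 Hdel)
    as (c & M & n & HcE & Hcc0 & HcB & HM & Hres).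
  destruct (Hadjust c HcE Hcc0) as (w' & Hw'c & Hw'E & Hww').
  exists p, w'.
  split; [exact Hw'E | split; [rewrite dist3_refl; exact Heps | split; [exact Hww' |]]].
  apply (in_Per_of_resonant A B G p w' z M n HA (proj1 HG) Gz); [congruence | exact HM |].
  rewrite (turn_drift_on_sphere A B E w' HA); congruence.
Qed.
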